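(* Let $p\in(0,1)$, $\beta\in(0,\infty)$, and $f(x)=-\ln[p+(1-p)e^{-x}]$. Set $$A:=2f(\beta)-f(2\beta),\qquad B:=f(\beta)+f(2\beta)-f(3\beta).$$ Let $n,k$ be integers with $c:=k\ln(1/p)/\ln n\le 2$. Let $q,q'$ be integers with $0\le q,q'\le k$. Let $g_1,\dots,g_9\ge0$ be integers satisfying $$g_1+g_2+g_3\le k-q,\quad g_4+g_5+g_6\le q,\quad g_7+g_8+g_9\le k-q,$$ $$g_1+g_4+g_7\le k-q',\quad g_2+g_5+g_8\le q',\quad g_3+g_6+g_9\le k-q',$$ and put $g=g_1+\dots+g_9$. Define $$C_1=A(g_5+g_6+g_8+g_9),\quad C_3=A(g_4+g_5+g_7+g_8),$$ $$C_7=A(g_2+g_3+g_5+g_6),\quad C_9=A(g_1+g_2+g_4+g_5),$$ $$C_2=A(g_4+g_6+g_7+g_9)+B(g_5+g_8),\quad C_4=A(g_2+g_3+g_8+g_9)+B(g_5+g_6),$$ $$C_6=A(g_1+g_2+g_7+g_8)+B(g_4+g_5),\quad C_8=A(g_1+g_3+g_4+g_6)+B(g_2+g_5),$$ $$C_5=A(g_1+g_3+g_7+g_9)+B(g_2+g_4+g_6+g_8),$$ and $$\Psi=\frac{g_5(g_5-1)}{2}\big(2f(2\beta)-f(4\beta)\big)+\frac12\sum_{r=1}^9 g_rC_r.$$ Then $\Psi\le\bar\Psi(q,q',g,g_5)$, where $$\bar\Psi=\frac{g_5(g_5-1)}{2}\big(2f(2\beta)-f(4\beta)\big)+\frac12\big(f(\beta)+f(2\beta)-f(3\beta)\big)\big((k\wedge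 g)+g_5\big)(g-g_5).$$
   Context: $k\wedge g$ denotes $\min(k,g)$. *)

From Stdlib Require Import Reals Lra Lia.
Open Scope R_scope.

Definition f (p x : R) : R := - ln (p + (1 - p) * exp (- x)).

Definition Acoef (p beta : R) : R := 2 * f p beta - f p (2 * beta).
Definition Bcoef (p beta : R) : R := f p beta + f p (2 * beta) - f p (3 * beta).

Definition Psi (p beta : R) (g1 g2 g3 g4 g5 g6 g7 g8 g9 : nat) : R :=
  let A := Acoef p beta in
  let B := Bcoef p beta in
  let G1 := INR g1 in let G2 := INR g2 in let G3 := INR g3 in
  let G4 := INR g4 in let G5 := INR g5 in let G6 := INR g6 in
  let G7 := INR g7 in let G8 := INR g8 in let G9 := INR g9 in
  let C1 := A * (G5 + G6 + G8 + G9) in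
  let C3 := A * (G4 + G5 + G7 + G8) in
  let C7 := A * (G2 + G3 + G5 + G6) in
  let C9 := A * (G1 + G2 + G4 + G5) in
  let C2 := A * (G4 + G6 + G7 + G9) + B * (G5 + G8) in
  let C4 := A * (G2 + G3 + G8 + G9) + B * (G5 + G6) in
  let C6 := A * (G1 + G2 + G7 + G8) + B * (G4 + G5) in
  let C8 := A * (G1 + G3 + G4 + G6) + B * (G2 + G5) in
  let C5 := A * (G1 + G3 + G7 + G9) + B * (G2 + G4 + G6 + G8) in
  G5 * (G5 - 1) / 2 * (2 * f p (2 * beta) - f p (4 * beta))
  + / 2 * (G1 * C1 + G2 * C2 + G3 * C3 + G4 * C4 + G5 * C5
           + G6 * C6 + G7 * C7 + G8 * C8 + G9 * C9).

(* \bar Psi(q, q', g, g5); it does not actually depend on q, q'. *)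
Definition Psibar (p beta : R) (k : nat) (q q' g g5 : nat) : R :=
  INR g5 * (INR g5 - 1) / 2 * (2 * f p (2 * beta) - f p (4 * beta))
  + / 2 * (f p beta + f p (2 * beta) - f p (3 * beta))
        * (INR (Nat.min k g) + INR g5) * (INR g - INR g5).

(** With [m(x) = p + (1 - p) e^{-x}] (the Laplace transform of a two-point law)
    one has [m(x) m(x + 2h) - m(x + h)^2 = p (1 - p) e^{-x} (1 - e^{-h})^2 >= 0],
    so [f = - ln m] is midpoint concave.  Since [f 0 = 0] this gives [0 <= A <= B].

    Place [g1, ..., g9] on a 3x3 grid read row by row; the rows of the grid are
    bounded by [k - q], [q], [k - q] and the columns by [k - q'], [q'], [k - q'].
    Replacing [A] by [B] in [sum g_r C_r] can only increase it, and then
    [C_r = B N_r] for a partial sum [N_r] of the grid.  For a non-central cell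
    [N_r] lies inside two adjacent lines of the grid, hence [N_r <= min k g];
    for the centre [N_5 = g - g5]. *)

From Stdlib Require Import Reals Lra Lia.
Open Scope R_scope.

Lemma mixture_pos (p w : R) : 0 <= p <= 1 -> 0 < w -> 0 < p + (1 - p) * w.
Proof. intros; nra. Qed.

Lemma f_0 (p : R) : f p 0 = 0.
Proof.
  unfold f; rewrite Ropp_0, exp_0.
  replace (p + (1 - p) * 1) with 1 by ring.
  rewrite ln_1; ring.
Qed.

Lemma f_midpoint_concave (p x h : R) :
  0 <= p <= 1 -> f p x + f p (x + 2 * h) <= 2 * f p (x + h).
Proof.
  intros hp; unfold f.
  set (u := exp (- x)); set (v := exp (- h)).
  assert (hu : 0 < u) by apply exp_pos.
  assert (hv : 0 < v) by apply exp_pos.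
  assert (e1 : exp (- (x + h)) = u * v).
  { unfold u, v; rewrite <- exp_plus; f_equal; ring. }
  assert (e2 : exp (- (x + 2 * h)) = u * v * v).
  { unfold u, v; rewrite <- !exp_plus; f_equal; ring. }
  rewrite e1, e2.
  set (m0 := p + (1 - p) * u); set (m1 := p + (1 - p) * (u * v));
    set (m2 := p + (1 - p) * (u * v * v)).
  assert (huv : 0 < u * v) by (apply Rmult_lt_0_compat; assumption).
  assert (huvv : 0 < u * v * v) by (apply Rmult_lt_0_compat; assumption).
  assert (h0 : 0 < m0) by (apply mixture_pos; assumption).
  assert (h1 : 0 < m1) by (apply mixture_pos; assumption).
  assert (h2 : 0 < m2) by (apply mixture_pos; assumption).
  assert (log_convex : m1 * m1 <= m0 * m2).
  { replace (m0 * m2) with (m1 * m1 + p * (1 - p) * u * ((1 - v) * (1 - v)))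
      by (unfold m0, m1, m2; ring).
    assert (0 <= p * (1 - p) * u * ((1 - v) * (1 - v))).
    { apply Rmult_le_pos; [| apply Rle_0_sqr].
      apply Rmult_le_pos; [apply Rmult_le_pos |]; lra. }
    lra. }
  assert (ln_le : ln (m1 * m1) <= ln (m0 * m2)).
  { destruct (Rle_lt_or_eq _ _ log_convex) as [lt | ->]; [| lra].
    left; apply ln_increasing; nra. }
  rewrite !ln_mult in ln_le by assumption.
  lra.
Qed.

Lemma Acoef_ge0 (p beta : R) : 0 <= p <= 1 -> 0 <= Acoef p beta.
Proof.
  intros hp; pose proof (f_midpoint_concave p 0 beta hp) as H.
  rewrite f_0, !Rplus_0_l in H.
  unfold Acoef; lra.
Qed.

Lemma Acoef_le_Bcoef (p beta : R) : 0 <= p <= 1 -> Acoef p beta <= Bcoef p beta.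
Proof.
  intros hp; pose proof (f_midpoint_concave p beta beta hp) as H.
  replace (beta + 2 * beta) with (3 * beta) in H by ring.
  replace (beta + beta) with (2 * beta) in H by ring.
  unfold Acoef, Bcoef; lra.
Qed.

Definition interaction (A B G1 G2 G3 G4 G5 G6 G7 G8 G9 : R) : R :=
  G1 * (A * (G5 + G6 + G8 + G9))
  + G2 * (A * (G4 + G6 + G7 + G9) + B * (G5 + G8))
  + G3 * (A * (G4 + G5 + G7 + G8))
  + G4 * (A * (G2 + G3 + G8 + G9) + B * (G5 + G6))
  + G5 * (A * (G1 + G3 + G7 + G9) + B * (G2 + G4 + G6 + G8))
  + G6 * (A * (G1 + G2 + G7 + G8) + B * (G4 + G5))
  + G7 * (A * (G2 + G3 + G5 + G6))
  + G8 * (A * (G1 + G3 + G4 + G6) + B * (G2 + G5))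
  + G9 * (A * (G1 + G2 + G4 + G5)).

Section Interaction.

Variables G1 G2 G3 G4 G5 G6 G7 G8 G9 : R.
Hypotheses (P1 : 0 <= G1) (P2 : 0 <= G2) (P3 : 0 <= G3) (P4 : 0 <= G4)
  (P5 : 0 <= G5) (P6 : 0 <= G6) (P7 : 0 <= G7) (P8 : 0 <= G8) (P9 : 0 <= G9).

Lemma interaction_le_diag (A B : R) :
  A <= B ->
  interaction A B G1 G2 G3 G4 G5 G6 G7 G8 G9
    <= interaction B B G1 G2 G3 G4 G5 G6 G7 G8 G9.
Proof.
  intros hAB.
  assert (hX : 0 <= interaction 1 0 G1 G2 G3 G4 G5 G6 G7 G8 G9)
    by (unfold interaction; nra).
  assert (interaction B B G1 G2 G3 G4 G5 G6 G7 G8 G9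
          - interaction A B G1 G2 G3 G4 G5 G6 G7 G8 G9
          = (B - A) * interaction 1 0 G1 G2 G3 G4 G5 G6 G7 G8 G9)
    by (unfold interaction; ring).
  nra.
Qed.

Variable M : R.
Hypotheses (rows12 : G1 + G2 + G3 + G4 + G5 + G6 <= M)
  (rows23 : G4 + G5 + G6 + G7 + G8 + G9 <= M)
  (cols12 : G1 + G2 + G4 + G5 + G7 + G8 <= M)
  (cols23 : G2 + G3 + G5 + G6 + G8 + G9 <= M).

Lemma interaction_diag_le (B : R) :
  0 <= B ->
  interaction B B G1 G2 G3 G4 G5 G6 G7 G8 G9
    <= B * (M + G5) * (G1 + G2 + G3 + G4 + G5 + G6 + G7 + G8 + G9 - G5).
Proof.
  intros hB.
  assert (off_centre :
    G1 * (G5 + G6 + G8 + G9) + G2 * (G4 + G5 + G6 + G7 + G8 + G9)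
    + G3 * (G4 + G5 + G7 + G8) + G4 * (G2 + G3 + G5 + G6 + G8 + G9)
    + G6 * (G1 + G2 + G4 + G5 + G7 + G8) + G7 * (G2 + G3 + G5 + G6)
    + G8 * (G1 + G2 + G3 + G4 + G5 + G6) + G9 * (G1 + G2 + G4 + G5)
    <= M * (G1 + G2 + G3 + G4 + G6 + G7 + G8 + G9)).
  { assert (G1 * (G5 + G6 + G8 + G9) <= G1 * M) by (apply Rmult_le_compat_l; lra).
    assert (G2 * (G4 + G5 + G6 + G7 + G8 + G9) <= G2 * M) by (apply Rmult_le_compat_l; lra).
    assert (G3 * (G4 + G5 + G7 + G8) <= G3 * M) by (apply Rmult_le_compat_l; lra).
    assert (G4 * (G2 + G3 + G5 + G6 + G8 + G9) <= G4 * M) by (apply Rmult_le_compat_l; lra).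
    assert (G6 * (G1 + G2 + G4 + G5 + G7 + G8) <= G6 * M) by (apply Rmult_le_compat_l; lra).
    assert (G7 * (G2 + G3 + G5 + G6) <= G7 * M) by (apply Rmult_le_compat_l; lra).
    assert (G8 * (G1 + G2 + G3 + G4 + G5 + G6) <= G8 * M) by (apply Rmult_le_compat_l; lra).
    assert (G9 * (G1 + G2 + G4 + G5) <= G9 * M) by (apply Rmult_le_compat_l; lra).
    lra. }
  apply Rmult_le_compat_l with (r := B) in off_centre; [| exact hB].
  unfold interaction.
  match goal with |- ?L <= ?R => assert (R - L >= 0); [| lra] end.
  ring_simplify; ring_simplify in off_centre; lra.
Qed.

End Interaction.

Theorem lemma3p1 (p beta : R) (n k q q' g1 g2 g3 g4 g5 g6 g7 g8 g9 : nat) :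
  0 < p < 1 ->
  0 < beta ->
  INR k * ln (/ p) / ln (INR n) <= 2 ->
  (q <= k)%nat -> (q' <= k)%nat ->
  (g1 + g2 + g3 <= k - q)%nat ->
  (g4 + g5 + g6 <= q)%nat ->
  (g7 + g8 + g9 <= k - q)%nat ->
  (g1 + g4 + g7 <= k - q')%nat ->
  (g2 + g5 + g8 <= q')%nat ->
  (g3 + g6 + g9 <= k - q')%nat ->
  Psi p beta g1 g2 g3 g4 g5 g6 g7 g8 g9
    <= Psibar p beta k q q' (g1 + g2 + g3 + g4 + g5 + g6 + g7 + g8 + g9) g5.
Proof.
  intros hp _ _ Hq Hq' R1 R2 R3 C1 C2 C3.
  assert (hp' : 0 <= p <= 1) by lra.
  pose proof (Acoef_ge0 p beta hp') as hA.
  pose proof (Acoef_le_Bcoef p beta hp') as hAB.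
  set (m := Nat.min k (g1 + g2 + g3 + g4 + g5 + g6 + g7 + g8 + g9)).
  assert (rows12 : INR g1 + INR g2 + INR g3 + INR g4 + INR g5 + INR g6 <= INR m)
    by (rewrite <- !plus_INR; apply le_INR; unfold m; lia).
  assert (rows23 : INR g4 + INR g5 + INR g6 + INR g7 + INR g8 + INR g9 <= INR m)
    by (rewrite <- !plus_INR; apply le_INR; unfold m; lia).
  assert (cols12 : INR g1 + INR g2 + INR g4 + INR g5 + INR g7 + INR g8 <= INR m)
    by (rewrite <- !plus_INR; apply le_INR; unfold m; lia).
  assert (cols23 : INR g2 + INR g3 + INR g5 + INR g6 + INR g8 + INR g9 <= INR m)
    by (rewrite <- !plus_INR; apply le_INR; unfold m; lia).
  unfold Psi, Psibar; fold m; rewrite !plus_INR.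
  change (f p beta + f p (2 * beta) - f p (3 * beta)) with (Bcoef p beta).
  fold (interaction (Acoef p beta) (Bcoef p beta) (INR g1) (INR g2) (INR g3)
    (INR g4) (INR g5) (INR g6) (INR g7) (INR g8) (INR g9)).
  apply Rplus_le_compat_l.
  rewrite !Rmult_assoc; apply Rmult_le_compat_l; [lra |].
  rewrite <- !Rmult_assoc.
  eapply Rle_trans; [apply interaction_le_diag | apply interaction_diag_le];
    auto using pos_INR; lra.
Qed.
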